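(* Let $q$ be a prime power such that none of $q-1$, $q$, $q+1$ is a power of $2$ (i.e. $\{q-1,q,q+1\}\cap\{2^k : k\in\mathbb{N}\}=\varnothing$), and let $G=\mathrm{SL}(2,q)$. If $x$ is a $2$-element of $G$, then $q-1$ or $q+1$ divides $|C_G(x)|$. In particular, $C_G(x)$ is not a $2$-group. *)

From HB Require Import structures.
From mathcomp Require Import all_boot all_order all_algebra all_fingroup all_solvable all_field.
Set Implicit Arguments. Unset Strict Implicit. Unset Printing Implicit Defensive.
Import GRing.Theory.
Local Open Scope group_scope.

Section SL2.
Variable F : finFieldType.

Definition SL2set : {set {'GL_2[F]}} := [set g : {'GL_2[F]} | (\det (GLval g) == 1)%R].

Lemma SL2_group_set : group_set SL2set.
Proof.
apply/group_setP; split.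
  by rewrite inE GL_1E det1.
move=> x y; rewrite !inE => /eqP dx /eqP dy.
by rewrite GL_MxE det_mulmx dx dy mulr1.
Qed.

Canonical SL2_group := Group SL2_group_set.
End SL2.

Notation SL2 F := (SL2_group F).

From HB Require Import structures.
From mathcomp Require Import all_boot all_order all_algebra all_fingroup all_solvable all_field.
From mathcomp Require Import ring zify.

(* If x is scalar, C_SL(x) is all of SL(2,q), of order q(q^2-1).  Otherwise x
   centralizes the unit group T of the algebra F[x] = {a + b x} (a plane, by
   Cayley-Hamilton).  For b <> 0, a + b x is singular iff -a/b is an eigenvalue
   of x, so |T| = q^2 - 1 - r(q-1) with r the number of eigenvalues of x in F.
   The determinant maps T into F^* with kernel T :&: SL(2,q), hence |T|/(q-1)
   divides |C_SL(x)|: this is q+1 when r = 0 and q-1 when r = 2.  When r = 1,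
   x = l + N with N^2 = 0, so x^(2^k) = l^(2^k) + 2^k l^(2^k-1) N; as q is not a
   power of 2 the characteristic is odd and x^(2^k) = 1 forces N = 0, i.e. x
   scalar.  Finally q-1 and q+1 are not powers of 2, so C_SL(x) is no 2-group. *)

Set Implicit Arguments.
Unset Strict Implicit.
Unset Printing Implicit Defensive.

Import GRing.Theory FinRing.Theory.
Local Open Scope ring_scope.

Section Pencil.
Variables (R : comNzRingType) (n : nat) (A : 'M[R]_n).

Definition pencil (ab : R * R) : 'M[R]_n := ab.1%:M + ab.2 *: A.

Lemma pencil_comm ab : pencil ab *m A = A *m pencil ab.
Proof. by rewrite mulmxDl mulmxDr mul_scalar_mx mul_mx_scalar -scalemxAl scalemxAr. Qed.

Lemma pencil_scale t b : pencil (- t * b, b) = b *: (A - t%:M).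
Proof. by rewrite /pencil /= scalerBr scale_scalar_mx mulNr raddfN addrC [t * b]mulrC. Qed.

End Pencil.

Section Matrix2.
Variable R : comNzRingType.
Implicit Types (A B : 'M[R]_2) (l : R).

Let ord2 (i : 'I_2) : i = 0 \/ i = 1.
Proof. by case: i => [[|[|//]]] ?; [left|right]; apply: val_inj. Qed.

Let lift0_ord2 : lift ord0 (ord0 : 'I_1) = 1 :> 'I_2.
Proof. exact: val_inj. Qed.

Lemma mx2P A B :
  A 0 0 = B 0 0 -> A 0 1 = B 0 1 -> A 1 0 = B 1 0 -> A 1 1 = B 1 1 -> A = B.
Proof.
move=> e00 e01 e10 e11; apply/matrixP => i j.
by case: (ord2 i) => ->; case: (ord2 j) => ->.
Qed.

Lemma mulmx2E A B i j : (A *m B) i j = A i 0 * B 0 j + A i 1 * B 1 j.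
Proof. by rewrite mxE !big_ord_recl big_ord0 addr0 lift0_ord2. Qed.

Lemma mxtrace2 A : \tr A = A 0 0 + A 1 1.
Proof. by rewrite /mxtrace !big_ord_recl big_ord0 addr0 lift0_ord2. Qed.

Lemma det_mx2 A : \det A = A 0 0 * A 1 1 - A 0 1 * A 1 0.
Proof.
rewrite (expand_det_row _ 0) !big_ord_recl big_ord0 addr0 /cofactor !det_mx11.
have lift1_ord1 : lift 1 (0 : 'I_1) = 0 :> 'I_2 by apply: val_inj.
by rewrite !mxE lift0_ord2 lift1_ord1 /= expr0 expr1 mul1r mulN1r mulrN.
Qed.

Lemma mx2_Cayley_Hamilton A : A *m A = \tr A *: A - (\det A)%:M.
Proof. by rewrite mxtrace2 det_mx2; apply: mx2P; rewrite !mulmx2E !mxE /=; ring. Qed.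

Lemma mx2_sqr_eq0 A : \tr A = 0 -> \det A = 0 -> A *m A = 0.
Proof. by rewrite mx2_Cayley_Hamilton => -> ->; rewrite scale0r raddf0 subr0. Qed.

Lemma det_mx2_sub_scalar A l : \det (A - l%:M) = l ^+ 2 - \tr A * l + \det A.
Proof. by rewrite !det_mx2 mxtrace2 !mxE /=; ring. Qed.

Lemma pencil_mulmx2 A a b c d :
  pencil A (a, b) *m pencil A (c, d) =
  pencil A (a * c - b * d * \det A, a * d + b * c + b * d * \tr A).
Proof. by rewrite mxtrace2 det_mx2; apply: mx2P; rewrite !mulmx2E !mxE /=; ring. Qed.

End Matrix2.

Section FieldPencil.
Variable F : fieldType.

Lemma eigenvalue_det n (A : 'M[F]_n) a : eigenvalue A a = (\det (A - a%:M) == 0).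
Proof.
apply/eigenvalueP/det0P => [[v vA v_neq0] | [v v_neq0 vA]]; exists v => //.
  by rewrite mulmxBr vA mul_mx_scalar subrr.
by apply/eqP; rewrite -mul_mx_scalar -subr_eq0 -mulmxBr vA.
Qed.

Lemma pencil_inj n (A : 'M[F]_n.+1) : ~~ is_scalar_mx A -> injective (pencil A).
Proof.
move=> nscalA [a b] [c d] /= eq_abcd.
have [eq_bd | neq_bd] := eqVneq b d.
  move: eq_abcd; rewrite /pencil /= eq_bd => /addIr/matrixP/(_ 0 0).
  by rewrite !mxE /= !mulr1n => ->.
case/negP: nscalA; apply/is_scalar_mxP; exists ((b - d)^-1 * (c - a)).
rewrite -scale_scalar_mx; apply: (canRL (scalerK _)); first by rewrite subr_eq0.
rewrite scalerBl raddfB /=; apply/eqP.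
by rewrite subr_eq addrAC eq_sym subr_eq [_ + a%:M]addrC; apply/eqP/esym.
Qed.

End FieldPencil.

Section Spectrum.
Variable F : finFieldType.

Definition spectrum n (A : 'M[F]_n) : {set F} := [set a | eigenvalue A a].

Lemma card_singular_pencil n (A : 'M[F]_n.+1) :
  #|[set ab | \det (pencil A ab) == 0]| = (1 + #|spectrum A| * #|F|.-1)%N.
Proof.
pose eigen_pairs := [set (- u.1 * u.2, u.2) | u in setX (spectrum A) [set~ 0]].
have -> : [set ab | \det (pencil A ab) == 0] = (0, 0) |: eigen_pairs.
  apply/setP => -[a b]; rewrite !inE; have [-> | b_neq0] := eqVneq b 0.
    rewrite /pencil scale0r addr0 det_scalar expf_eq0 /=.
    apply/idP/orP => [/eqP-> | [/eqP[->] // | /imsetP[[t c]]]]; first by left.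
    by rewrite !inE /= => /andP[_ /negPf c_neq0] [_ /esym/eqP]; rewrite c_neq0.
  have -> : pencil A (a, b) = b *: (A - (- a / b)%:M).
    by rewrite -pencil_scale mulNr divfK // opprK.
  rewrite detZ mulf_eq0 expf_eq0 (negPf b_neq0) -eigenvalue_det xpair_eqE.
  rewrite (negPf b_neq0) !andbF /=; apply/idP/imsetP => [Ab | [[t c]]].
    by exists (- a / b, b); rewrite ?inE ?Ab ?b_neq0 // mulNr divfK // opprK.
  by rewrite !inE /= => /andP[At c_neq0] [-> ->]; rewrite mulNr mulfK // opprK.
rewrite cardsU1 card_in_imset ?cardsX ?cardsC1.
  congr (_ + _)%N; apply/eqP; rewrite eqb1; apply/imsetP => -[[t c]].
  by rewrite !inE /= => /andP[_ /negPf c_neq0] [_ /esym/eqP]; rewrite c_neq0.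
move=> [t c] [s d]; rewrite !inE /= => /andP[_ c_neq0] _ [eq_tcsd eq_cd].
by move: eq_tcsd; rewrite -eq_cd => /(mulIf c_neq0)/oppr_inj ->.
Qed.

Lemma mem_spectrum2 (A : 'M[F]_2) t :
  (t \in spectrum A) = (t ^+ 2 - \tr A * t + \det A == 0).
Proof. by rewrite inE eigenvalue_det det_mx2_sub_scalar. Qed.

Lemma spectrum2_cases (A : 'M[F]_2) :
  [\/ #|spectrum A| = 0%N, #|spectrum A| = 2%N
    | exists l, (A - l%:M) *m (A - l%:M) = 0].
Proof.
have [-> | [t0 At0]] := set_0Vmem (spectrum A); first by constructor 1; rewrite cards0.
have root_t0 : t0 ^+ 2 - \tr A * t0 + \det A = 0 by apply/eqP; rewrite -mem_spectrum2.
have [eq_t0 | neq_t0] := eqVneq t0 (\tr A - t0).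
  constructor 3; exists t0; apply: mx2_sqr_eq0.
    have tr_A : \tr A = t0 *+ 2 by rewrite mulr2n {1}eq_t0 subrK.
    by rewrite linearB /= mxtrace_scalar tr_A subrr.
  by apply/eqP; rewrite -eigenvalue_det -inE.
constructor 2; suff -> : spectrum A = [set t0; \tr A - t0] by rewrite cards2 neq_t0.
apply/setP => t; rewrite mem_spectrum2 !inE.
have -> : t ^+ 2 - \tr A * t + \det A =
          (t - t0) * (t - (\tr A - t0)) + (t0 ^+ 2 - \tr A * t0 + \det A) by ring.
by rewrite root_t0 addr0 mulf_eq0 !subr_eq0.
Qed.

End Spectrum.

Section Determinant.
Variables (F : finFieldType) (n : nat).

Definition GLdet (g : {'GL_n[F]}) : {unit F} :=
  insubd (1%g : {unit F}) (\det (GLval g)).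

Lemma GLdetE g : val (GLdet g) = \det (GLval g).
Proof. by rewrite insubdK // unitfE GL_det. Qed.

Lemma GLdet_morphic : morphic [set: {'GL_n[F]}] GLdet.
Proof.
by apply/morphicP => g h _ _; apply: val_inj; rewrite val_unitM !GLdetE GL_MxE det_mulmx.
Qed.

Definition GLdet_morphism := morphm_morphism GLdet_morphic.

Lemma ker_GLdet : ('ker GLdet_morphism)%g = [set g | \det (GLval g) == 1].
Proof.
apply/setP => g; rewrite [RHS]inE; apply/kerP/eqP; rewrite ?inE //= morphmE -GLdetE.
  by move=> ->.
by move=> det_g; apply: val_inj.
Qed.

Lemma dvdn_card_setI_SL (H : {group {'GL_n[F]}}) :
  (#|H| %| #|H :&: [set g | \det (GLval g) == 1%R]| * #|F|.-1)%N.
Proof.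
have im_dvd : (#|(GLdet_morphism @* H)%g| %| #|F|.-1)%N.
  by rewrite -card_finField_unit cardSg ?subsetT.
rewrite -ker_GLdet -(Lagrange (subsetIl H ('ker GLdet_morphism)%G)) /=.
by rewrite indexgI -[H in #|H : _|%g]setTI -card_morphim dvdn_mul.
Qed.

End Determinant.

Section PencilUnits.
Variables (F : finFieldType) (A : 'M[F]_2).

Definition pencil_units : {set {'GL_2[F]}} :=
  [set g : {'GL_2[F]} | [exists ab, GLval g == pencil A ab]].

Lemma pencil_units_group_set : group_set pencil_units.
Proof.
apply/group_setP; split.
  by rewrite inE; apply/existsP; exists (1, 0); rewrite /pencil /= scale0r addr0.
move=> g h; rewrite !inE => /existsP[[a b] /eqP gE] /existsP[[c d] /eqP hE].
by apply/existsP; eexists; rewrite GL_MxE gE hE pencil_mulmx2.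
Qed.

Canonical pencil_units_group := Group pencil_units_group_set.

Lemma pencil_units_cent (x : {'GL_2[F]}) :
  GLval x = A -> pencil_units \subset 'C[x]%g.
Proof.
move=> xA; apply/subsetP => g; rewrite inE => /existsP[ab /eqP gE].
apply/cent1P/val_inj; change (GLval (g * x)%g = GLval (x * g)%g).
by rewrite !GL_MxE gE xA pencil_comm.
Qed.

Lemma card_pencil_units : ~~ is_scalar_mx A ->
  (#|pencil_units| + #|spectrum A| * #|F|.-1 = #|F|.-1 * #|F|.+1)%N.
Proof.
move=> nscalA; pose regular := [set ab | \det (pencil A ab) != 0].
have -> : #|pencil_units| = #|regular|.
  rewrite -(card_imset _ val_inj) -(card_imset _ (pencil_inj nscalA)).
  apply: eq_card => M; apply/imsetP/imsetP => [[g] | [ab]].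
    rewrite inE => /existsP[ab /eqP gE] ->; exists ab => //.
    by rewrite inE -gE; exact: (GL_det g).
  rewrite inE => det_ab ->.
  have unit_ab : pencil A ab \is a GRing.unit by rewrite unitmxE unitfE.
  by exists (Sub (pencil A ab) unit_ab); rewrite ?SubK // inE; apply/existsP; exists ab.
have := cardsC [set ab | \det (pencil A ab) == 0].
rewrite card_prod card_singular_pencil.
have -> : ~: [set ab | \det (pencil A ab) == 0] = regular by apply/setP => ab; rewrite !inE.
by have := card_finNzRing_gt1 F; case: #|F| => // q _; lia.
Qed.

End PencilUnits.

Section Unipotent.
Variables (F : fieldType) (n : nat).
Implicit Types (N : 'M[F]_n.+1) (l : F).

Lemma exp_scalar_add_nilpotent N l m : N *m N = 0 ->
  (l%:M + N) ^+ m.+1 = (l ^+ m.+1)%:M + (m.+1%:R * l ^+ m) *: N.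
Proof.
move=> NN; elim: m => [|m IHm]; first by rewrite expr1 expr0 mulr1 scale1r.
rewrite exprSr IHm -mulmxE mulmxDl !mulmxDr -scalar_mxM mul_scalar_mx.
rewrite -!scalemxAl NN scaler0 addr0 mul_mx_scalar scalerA -exprSr -addrA -scalerDl.
by congr (_ + _ *: N); rewrite exprS [_.+2%:R]mulrS; ring.
Qed.

Lemma nilpotent_eq0_of_exp_eq1 N l m : N *m N = 0 ->
  (l%:M + N) ^+ m = 1 -> m%:R != 0 :> F -> N = 0.
Proof.
case: m => [|m] NN; first by rewrite eqxx.
rewrite exp_scalar_add_nilpotent // => unit_eq m_neq0.
(* Multiplying by N on the right gives l^(m+1) = 1 or N = 0, and if l^(m+1) = 1
   the coefficient (m+1) l^m of N is a unit. *)
have : (l ^+ m.+1 - 1) *: N = 0.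
  have := congr1 (mulmx^~ N) unit_eq; rewrite mulmxDl mul_scalar_mx -scalemxAl NN.
  by rewrite scaler0 addr0 mul1mx scalerBl scale1r => ->; rewrite subrr.
move/eqP; rewrite scaler_eq0 subr_eq0 => /orP[/eqP l_unit | /eqP //].
move: unit_eq; rewrite l_unit => /(canRL (addKr _)); rewrite addNr => /eqP.
rewrite scaler_eq0 mulf_eq0 (negPf m_neq0) expf_eq0 /=.
case/orP=> [/andP[_ /eqP l0] | /eqP //].
by move: l_unit; rewrite l0 expr0n /= => /eqP; rewrite eq_sym oner_eq0.
Qed.

End Unipotent.

Lemma pnat_natr_neq0 (R : idomainType) (p m : nat) :
  p.-nat m -> p%:R != 0 :> R -> m%:R != 0 :> R.
Proof. by move=> /part_pnat_id <- p_neq0; rewrite p_part natrX expf_neq0. Qed.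

Section CentralizersInSL2.
Variable F : finFieldType.
Local Notation q := #|F|.

Lemma card_finField_pred_gt0 : (0 < q.-1)%N.
Proof. by rewrite -subn1 subn_gt0 card_finNzRing_gt1. Qed.

Lemma dvdn_card_SL2 : (q.-1 %| #|SL2 F|)%N.
Proof.
have := dvdn_card_setI_SL ('GL_2[F])%G; rewrite setTI card_GL_2 expnS expn1 mulnA mulnAC.
rewrite dvdn_pmul2r ?card_finField_pred_gt0 // => /(dvdn_trans _)-> //.
by rewrite mulnAC dvdn_mull.
Qed.

Section Tori.
Variable A : 'M[F]_2.
Hypothesis nscalA : ~~ is_scalar_mx A.
Local Notation T := (pencil_units_group A).

Lemma dvdn_card_pencil_units_SL2_nonsplit :
  #|spectrum A| = 0%N -> (q.+1 %| #|T :&: SL2 F|)%N.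
Proof.
move=> spec0; have := card_pencil_units nscalA; rewrite spec0 mul0n addn0.
move=> cardT; have := dvdn_card_setI_SL T.
by rewrite cardT [(q.-1 * _)%N]mulnC dvdn_pmul2r // card_finField_pred_gt0.
Qed.

Lemma dvdn_card_pencil_units_SL2_split :
  #|spectrum A| = 2%N -> (q.-1 %| #|T :&: SL2 F|)%N.
Proof.
move=> spec2; have := dvdn_card_setI_SL T.
have -> : #|T| = (q.-1 * q.-1)%N.
  have := card_pencil_units nscalA; rewrite spec2.
  have := card_finNzRing_gt1 F; case: q => // k _ /=.
  by move/eqP; rewrite !mulnSr -addnA addnn -mul2n eqn_add2r => /eqP.
by rewrite dvdn_pmul2r // card_finField_pred_gt0.
Qed.

End Tori.

Local Open Scope group_scope.

Lemma dvdn_card_cent_SL2 (x : {'GL_2[F]}) :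
  (2%:R != 0 :> F)%R -> x \in SL2 F -> 2.-elt x ->
  (q.-1 %| #|'C_(SL2 F)[x]|)%N || (q.+1 %| #|'C_(SL2 F)[x]|)%N.
Proof.
move=> two_neq0 xSL x2; set X := GLval x.
have [/is_scalar_mxP[c Xc] | nscalX] := boolP (is_scalar_mx X).
  suff -> : 'C_(SL2 F)[x] = SL2 F by rewrite dvdn_card_SL2.
  apply/setIidPl/subsetP => g _; apply/cent1P/val_inj.
  change (GLval (g * x) = GLval (x * g)).
  by rewrite !GL_MxE -/X Xc scalar_mxC.
have sub_cent : pencil_units_group X :&: SL2 F \subset 'C_(SL2 F)[x].
  by rewrite setIC setIS ?pencil_units_cent.
case: (spectrum2_cases X) => [spec0 | spec2 | [l nil_Xl]].
- by rewrite orbC (dvdn_trans (dvdn_card_pencil_units_SL2_nonsplit nscalX spec0)) ?cardSg.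
- by rewrite (dvdn_trans (dvdn_card_pencil_units_SL2_split nscalX spec2)) ?cardSg.
case/negP: nscalX; apply/is_scalar_mxP; exists l; apply/eqP; rewrite -subr_eq0; apply/eqP.
apply: (nilpotent_eq0_of_exp_eq1 (l := l) (m := #[x])) nil_Xl _ _.
  by rewrite addrC subrK /X -val_unitX expg_order.
exact: pnat_natr_neq0 x2 two_neq0.
Qed.

End CentralizersInSL2.

Local Open Scope group_scope.

Theorem theorem6p5 (F : finFieldType) (x : {'GL_2[F]}) :
  (forall k : nat, [/\ (#|F|.-1 != 2 ^ k)%N, (#|F| != 2 ^ k)%N & (#|F|.+1 != 2 ^ k)%N]) ->
  x \in SL2 F -> 2.-elt x ->
  ((#|F|.-1 %| #|'C_(SL2 F)[x]|)%N || (#|F|.+1 %| #|'C_(SL2 F)[x]|)%N)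
  /\ ~~ 2.-group 'C_(SL2 F)[x].
Proof.
move=> not_pow2 xSL x2.
have two_neq0 : (2%:R != 0 :> F)%R.
  apply/negP => /eqP two_eq0; have pchar2 : 2 \in [pchar F] by rewrite inE two_eq0 eqxx.
  by case: (not_pow2 (logn 2 #|F|)) => _ /eqP[]; apply: card_pprimeChar pchar2.
have dvdn_cent := dvdn_card_cent_SL2 two_neq0 xSL x2; split => //.
apply/negP => cent_2group.
case/orP: dvdn_cent => /pnat_dvd/(_ cent_2group)/part_pnat_id; rewrite p_part => pow2.
  by case: (not_pow2 (logn 2 #|F|.-1)) => /eqP[]; rewrite pow2.
by case: (not_pow2 (logn 2 #|F|.+1)) => _ _ /eqP[]; rewrite pow2.
Qed.
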